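(* Let $(H,+,\circ)$ be a commutative multiplicative hyperring with identity of characteristic $2$, and let $P$ be a proper strong $\mathcal{C}$-hyperideal of $H$. If $\mathrm{rad}(P)=P$, then $P$ is an sdf-absorbing hyperideal of $H$.
   Context: A commutative multiplicative hyperring $(H,+,\circ)$ consists of an abelian group $(H,+)$ and an associative, commutative hyperoperation $\circ: H\times H\to P^*(H)$ with $x\circ(y+z)\subseteq x\circ y+x\circ z$ and $x\circ(-y)=-(x\circ y)=(-x)\circ y$. For subsets $A,B$, $A\circ B=\bigcup_{a\in A,b\in B}a\circ b$, $A\pm B=\{a\pm b\}$; $x^n=x\circ\cdots\circ x$. Identity: $x\in x\circ 1$ for all $x$. $H$ has characteristic $\alpha$ if $\alpha$ is the least positive integer with $\alpha x=0$ for all $x\in H$. A hyperideal is a nonempty $P$ with $x-y\in P$ and $r\circ x\subseteq P$ for $x,y\in P$, $r\in H$. A proper hyperideal $P$ is prime if $x\circ y\subseteq P$ implies $x\in P$ or $y\in P$; $\mathrm{rad}(P)$ is the intersection of the prime hyperideals containing $P$ ($H$ if none). Let $\mathcal{C}=\{c_1\circ\cdots\circ c_n: c_i\in H,n\in\mathbb{N}\}$ and $\mathfrak{C}=\{\sum_{i=1}^n C_i: C_i\in\mathcal{C}, n\in\mathbb{N}\}$; a hyperideal $P$ is a strong $\mathcal{C}$-hyperideal if for every $D\in\mathfrak{C}$, $D\cap P\neq\varnothing$ implies $D\subseteq P$. A proper hyperideal $P$ is sdf-absorbing if whenever $0\neq x,y\in H$ and $x^2-y^2\subseteq P$, then $x-y\in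 P$ or $x+y\in P$. *)

(* (H,+) is a zmodType; the hyperoperation is a ternary
   relation  hm x y z  meaning  z \in x o y. Subsets are predicates G -> Prop. *)
From HB Require Import structures.
From mathcomp Require Import all_boot all_order all_algebra.
Set Implicit Arguments. Unset Strict Implicit. Unset Printing Implicit Defensive.
Import GRing.Theory.
Local Open Scope ring_scope.

Section Hyper.
Variable G : zmodType.
Variable hm : G -> G -> G -> Prop.

Definition hset := G -> Prop.
Definition sing (x : G) : hset := fun y => y = x.
Definition subset (A B : hset) := forall z, A z -> B z.
Definition seteq (A B : hset) := forall z, A z <-> B z.

Definition hprod (A B : hset) : hset :=
  fun z => exists a b, A a /\ B b /\ hm a b z.
Definition hsum (A B : hset) : hset :=
  fun z => exists a b, A a /\ B b /\ z = a + b.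
Definition hdiff (A B : hset) : hset :=
  fun z => exists a b, A a /\ B b /\ z = a - b.

Definition comm_mult_hyperring : Prop :=
  (forall x y, exists z, hm x y z) /\
  (forall x y z, seteq (hprod (hprod (sing x) (sing y)) (sing z))
                       (hprod (sing x) (hprod (sing y) (sing z)))) /\
  (forall x y z, hm x y z <-> hm y x z) /\
  (forall x y z, subset (hm x (y + z)) (hsum (hm x y) (hm x z))) /\
  (forall x y z, hm x (- y) z <-> hm x y (- z)) /\
  (forall x y z, hm (- x) y z <-> hm x y (- z)).

Definition has_identity : Prop := exists one : G, forall x, hm x one x.

Definition hchar (alpha : nat) : Prop :=
  (0 < alpha)%N /\ (forall x : G, x *+ alpha = 0) /\
  (forall k, (0 < k < alpha)%N -> ~ (forall x : G, x *+ k = 0)).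

Definition hyperideal (P : hset) : Prop :=
  (exists x, P x) /\ (forall x y, P x -> P y -> P (x - y)) /\
  (forall r x, P x -> subset (hm r x) P).

Definition hproper (P : hset) : Prop := exists x, ~ P x.

Definition prime_hyperideal (P : hset) : Prop :=
  hyperideal P /\ hproper P /\
  (forall x y, subset (hm x y) P -> P x \/ P y).

(* intersection of the prime hyperideals containing P (H if there is none) *)
Definition hrad (P : hset) : hset :=
  fun x => forall Q, prime_hyperideal Q -> subset P Q -> Q x.

(* c_1 o c_2 o ... o c_n, for the nonempty list c :: cs *)
Definition cprod (c : G) (cs : seq G) : hset :=
  foldl (fun A x => hprod A (sing x)) (sing c) cs.

(* C_1 + ... + C_n with C_i in the family C, given by a nonempty list *)
Definition Cset (t : G * seq G) (ts : seq (G * seq G)) : hset :=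
  foldl (fun A u => hsum A (cprod u.1 u.2)) (cprod t.1 t.2) ts.

Definition strong_C_hyperideal (P : hset) : Prop :=
  hyperideal P /\
  forall t ts, (exists d, Cset t ts d /\ P d) -> subset (Cset t ts) P.

Definition sdf_absorbing (P : hset) : Prop :=
  hyperideal P /\ hproper P /\
  forall x y : G, x != 0 -> y != 0 ->
    subset (hdiff (hm x x) (hm y y)) P -> P (x - y) \/ P (x + y).

End Hyper.

From Pilot Require Import Defs.
From mathcomp Require Import all_boot all_order all_algebra.
Import GRing.Theory.
Local Open Scope ring_scope.

(* In characteristic 2, for a in x o x, b in y o y and c in x o y we have
   a - b = a + c + c + b, an element of the C-set
   D = x o x + x o y + y o x + y o y.  As x^2 - y^2 is contained in P, D meets
   P, so D is contained in P because P is a strong C-hyperideal.  By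
   distributivity (x + y) o (x + y) is contained in D, hence in every prime
   hyperideal containing P, which therefore contains x + y.  So x + y lies in
   rad(P) = P. *)

Section CharTwo.

Context {G : zmodType}.
Hypothesis char2 : forall x : G, x *+ 2 = 0.

Lemma addrr_char2 (x : G) : x + x = 0.
Proof. by rewrite -mulr2n char2. Qed.

Lemma oppr_char2 (x : G) : - x = x.
Proof. by apply/eqP; rewrite eq_sym -subr_eq0 opprK addrr_char2. Qed.

End CharTwo.

Section SquareOfSum.

Context {G : zmodType} {hm : G -> G -> G -> Prop}.

Definition sq_expansion (x y : G) : hset G :=
  Cset hm (x, [:: x]) [:: (x, [:: y]); (y, [:: x]); (y, [:: y])].

Lemma mem_hsum {A B : hset G} {a b} : A a -> B b -> hsum A B (a + b).
Proof. by move=> Aa Bb; exists a, b. Qed.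

Lemma mem_cprod1 u v w : hm u v w -> cprod hm u [:: v] w.
Proof. by move=> huv; exists u, v. Qed.

Lemma mem_sq_expansion x y a1 a2 a3 a4 :
  hm x x a1 -> hm x y a2 -> hm y x a3 -> hm y y a4 ->
  sq_expansion x y (a1 + a2 + a3 + a4).
Proof.
by move=> *; do !apply: mem_hsum; apply: mem_cprod1.
Qed.

Hypothesis hm_comm : forall x y z, hm x y z <-> hm y x z.
Hypothesis hm_distr :
  forall x y z, Defs.subset (hm x (y + z)) (hsum (hm x y) (hm x z)).

Lemma hm_sqD_sub x y : Defs.subset (hm (x + y) (x + y)) (sq_expansion x y).
Proof.
move=> z /hm_distr [u [v [hu [hv ->]]]].
move/hm_comm: hu => /hm_distr [a1 [a2 [h1 [h2 ->]]]].
move/hm_comm: hv => /hm_distr [a3 [a4 [h3 [h4 ->]]]].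
by rewrite addrA; apply: mem_sq_expansion.
Qed.

Hypothesis hm_total : forall x y, exists z, hm x y z.
Hypothesis char2 : forall x : G, x *+ 2 = 0.

Lemma sq_expansion_meets_sq_diff x y :
  exists2 d, sq_expansion x y d & hdiff (hm x x) (hm y y) d.
Proof.
have [a ha] := hm_total x x; have [b hb] := hm_total y y.
have [c hc] := hm_total x y.
exists (a + c + c + b); first by apply: mem_sq_expansion => //; apply/hm_comm.
exists a, b; split=> //; split=> //.
by rewrite -(addrA a) (addrr_char2 char2) addr0 (oppr_char2 char2).
Qed.

Lemma strong_C_sq_diff_sub P x y :
  strong_C_hyperideal hm P -> Defs.subset (hdiff (hm x x) (hm y y)) P ->
  Defs.subset (hm (x + y) (x + y)) P.
Proof.
move=> [_ strongP] sqdP z /hm_sqD_sub; apply: strongP.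
by have [d Dd /sqdP Pd] := sq_expansion_meets_sq_diff x y; exists d.
Qed.

End SquareOfSum.

Lemma hrad_of_sq_sub {G : zmodType} {hm : G -> G -> G -> Prop} P z :
  Defs.subset (hm z z) P -> hrad hm P z.
Proof. by move=> sqP Q [_ [_ primeQ]] PQ; case: (primeQ z z) => // w /sqP /PQ. Qed.

Theorem mainTheorem2 (G : zmodType) (hm : G -> G -> G -> Prop) (P : G -> Prop) :
  comm_mult_hyperring hm -> has_identity hm -> hchar G 2 ->
  hproper P -> strong_C_hyperideal hm P ->
  (forall x, hrad hm P x <-> P x) ->
  sdf_absorbing hm P.
Proof.
move=> [total [_ [comm [distr _]]]] _ [_ [char2 _]] properP strongP radP.
split; first by case: strongP.
split=> // x y _ _ sqdP; right.
apply/radP; exact: hrad_of_sq_sub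
  (strong_C_sq_diff_sub comm distr total char2 _ _ _ strongP sqdP).
Qed.
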